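(* Let $\tau_0$ be the empty matching and for $n>0$ let $\tau_{2n-1}=\tau_{2n-2}(m+1)(m+1)$, where $m=|\tau_{2n-2}|$ (juxtaposition of $\tau_{2n-2}$ with a single edge), and $\tau_{2n}=1(\tau_{2n-1}+1)1$ (the lifting of $\tau_{2n-1}$). Let $f_{n,k}$ be the number of matchings with exactly $k$ edges in the interval $[11,\tau_n]$ of the matching pattern poset, and $f_n=|[11,\tau_n]|$. Then for $n>0$ and $0<k\leq n$: (i) $f_{n,k}=\sum_{i=0}^{n-k}\binom{k-1}{i}$; (ii) $f_{n}=\varphi_{n+2}-1$, where $\varphi_m$ is the $m$-th Fibonacci number ($\varphi_0=0,\varphi_1=\varphi_2=1$).
   Context: A matching of order $n$ is a partition of $[2n]$ into blocks (edges) of size two, identified with the word in $[n]^{2n}$ where both vertices of an edge carry the same letter and letters appear in increasing order of left vertices; $11$ is the matching with one edge. For a matching $\alpha$, $\alpha+1$ is its word with $1$ added to every letter, and words are concatenated. The matching pattern poset orders matchings by $\sigma\le\tau$ iff $\sigma$ is a pattern of $\tau$: with $|\sigma|=k$, there are $i_1<\dots<i_{2k}$ with $\{i_p,i_q\}\in\tau$ iff $\{p,q\}\in\sigma$. The interval $[11,\tau]$ is the set of matchings $\sigma$ with $11\le\sigma\le\tau$. *)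

From mathcomp Require Import all_boot.
Set Implicit Arguments. Unset Strict Implicit. Unset Printing Implicit Defensive.

(* A matching of order n is encoded by its canonical word in [n]^{2n}
   (letters 1..n, each occurring exactly twice; first occurrences in
   increasing order, i.e. undup w = [:: 1; 2; ...; n]). *)
Definition is_matching (w : seq nat) : bool :=
  (undup w == iota 1 (size w)./2) && all (fun x => count_mem x w == 2) w.

Definition nedges (w : seq nat) : nat := (size w)./2.

Definition pattern (sigma tau : seq nat) : bool :=
  [exists m : (size tau).-tuple bool,
     let w := mask m tau in
     (size w == size sigma) &&
     [forall p : 'I_(size sigma), forall q : 'I_(size sigma),
        (nth 0 sigma p == nth 0 sigma q) == (nth 0 w p == nth 0 w q)]].

Definition edge11 : seq nat := [:: 1; 1].

Fixpoint tau (n : nat) : seq nat :=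
  match n with
  | 0 => [::]
  | n'.+1 =>
      let t := tau n' in
      if odd n then t ++ [:: (nedges t).+1; (nedges t).+1]
      else 1 :: rcons (map S t) 1
  end.

(* f_{n,k}: matchings with exactly k edges in [11, tau_n].  Every matching
   with k edges has a canonical word of length 2k over letters in 1..k,
   hence is (the image of) a (2k)-tuple over 'I_(k+1). *)
Definition fnk (n k : nat) : nat :=
  #|[set t : (2 * k).-tuple 'I_k.+1 |
      let s := map val t in
      [&& is_matching s, pattern edge11 s & pattern s (tau n)]]|.

(* f_n = |[11, tau_n]|: a pattern of tau_n has at most |tau_n| edges, so
   the interval is the disjoint union of its rank-k parts, k <= |tau_n|. *)
Definition fn (n : nat) : nat := \sum_(k < (nedges (tau n)).+1) fnk n k.

Fixpoint fib (n : nat) : nat :=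
  match n with
  | 0 => 0
  | 1 => 1
  | (m.+1 as m1).+1 => fib m1 + fib m
  end.

From mathcomp Require Import all_boot zify.
Set Implicit Arguments. Unset Strict Implicit. Unset Printing Implicit Defensive.

(* Every nonempty pattern of [tau n] is built from the one-edge matching 11 by a
   word in two operations, appending a new edge on the right and wrapping a new
   outer edge around everything, and distinct words build distinct matchings.
   As [tau n] is itself built by the alternating word of length n-1, restricting
   an occurrence of a pattern to [tau (n-1)] shows that the patterns of [tau n]
   with k edges are the matchings built by the words of length k-1 that are
   subwords of this alternating word.  A word is such a subword iff its length,
   plus the number of its equal adjacent letters, plus one if its first
   operation is an append, is less than n; recording the equal adjacencies is a
   bijection on words of a given length, whence (i).  Summing (i) over k gives
   f_(n+2) = f_(n+1) + f_n + 1, whence (ii). *)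

Section SeqFacts.

Variable T : eqType.
Implicit Types (t u v : seq T) (c x : T).

Lemma undup_rcons_fresh v c : c \notin v -> undup (rcons v c) = rcons (undup v) c.
Proof.
move=> cv; rewrite undup_rcons; congr rcons.
rewrite -[RHS]filter_predT; apply: eq_in_filter => x; rewrite mem_undup.
by apply: contraTN => /eqP ->.
Qed.

Lemma undup_append_pair v c : c \notin v -> undup (v ++ [:: c; c]) = rcons (undup v) c.
Proof.
move=> cv; rewrite undup_cat /= inE eqxx /= -cats1; congr (_ ++ _).
rewrite -[RHS]filter_predT; apply: eq_in_filter => x; rewrite mem_undup !inE orbb.
by apply: contraTN => /eqP ->.
Qed.

Lemma undup_wrap_pair v c : c \notin v -> undup (c :: rcons v c) = rcons (undup v) c.
Proof. by move=> cv; rewrite /= mem_rcons inE eqxx undup_rcons_fresh. Qed.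

Lemma notin_mask c m t : c \notin t -> c \notin mask m t.
Proof. by apply: contra => /mem_mask. Qed.

Definition paired u : bool := all (fun x => count_mem x u == 2) u.

Lemma paired_perm u v : perm_eq u v -> paired u = paired v.
Proof.
move=> uv; rewrite /paired (perm_all _ uv); apply: eq_all => x.
by rewrite (permP uv).
Qed.

Lemma paired_append_pair u c : c \notin u -> paired (u ++ [:: c; c]) = paired u.
Proof.
move=> cu; rewrite /paired all_cat /= !count_cat /= eqxx (count_memPn cu) /= andbT.
apply: eq_in_all => x xu; rewrite count_cat /=.
have -> : (c == x) = false by apply: contraTF xu => /eqP <-.
by rewrite /nat_of_bool !addn0.
Qed.

Lemma paired_wrap_pair u c : c \notin u -> paired (c :: rcons u c) = paired u.
Proof.
move=> cu; rewrite -(paired_append_pair cu); apply: paired_perm.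
by rewrite perm_sym perm_catC /= perm_cons perm_sym perm_rcons.
Qed.

Lemma count_mem_one_unpaired u x : count_mem x u = 1 -> ~~ paired u.
Proof.
move=> ux; have xu : x \in u by apply/count_memPn; rewrite ux.
by apply/negP => /allP /(_ x xu); rewrite ux.
Qed.

Lemma mask_append_pair t c m : c \notin t -> size m = (size t).+2 ->
  paired (mask m (t ++ [:: c; c])) ->
  exists2 m1, size m1 = size t &
    mask m (t ++ [:: c; c]) = mask m1 t \/ mask m (t ++ [:: c; c]) = mask m1 t ++ [:: c; c].
Proof.
move=> ct Sm Pm; set m1 := take (size t) m.
have S1 : size m1 = size t by rewrite size_takel // Sm -addn2 leq_addr.
have : size (drop (size t) m) = 2 by rewrite size_drop Sm -addn2 addKn.
case Ed: (drop (size t) m) => [|a [|b [|]]] // _.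
have Em : m = m1 ++ [:: a; b] by rewrite -Ed cat_take_drop.
rewrite {}Em mask_cat // in Pm *; exists m1 => //; clear Ed.
have single : count_mem c (mask m1 t ++ [:: c]) = 1.
  by rewrite count_cat (count_memPn (notin_mask m1 ct)) /= eqxx.
have /negbTE unpaired := count_mem_one_unpaired single.
by case: a b Pm => [] [] /= Pm; rewrite ?unpaired ?cats0 in Pm *; [right| | |left].
Qed.

Lemma mask_wrap_pair t c m : c \notin t -> size m = (size t).+2 ->
  paired (mask m (c :: rcons t c)) ->
  exists2 m1, size m1 = size t &
    mask m (c :: rcons t c) = mask m1 t \/ mask m (c :: rcons t c) = c :: rcons (mask m1 t) c.
Proof.
move=> ct; case: m => [|a m] //= [].
case/lastP: m => [|m1 b] //; rewrite size_rcons => -[S1] Pm.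
rewrite mask_rcons // in Pm *; exists m1 => //; have cm := notin_mask m1 ct.
have single_l : count_mem c (c :: mask m1 t) = 1 by rewrite /= eqxx (count_memPn cm).
have single_r : count_mem c (mask m1 t ++ [:: c]) = 1.
  by rewrite count_cat (count_memPn cm) /= eqxx.
have /negbTE unpaired_l := count_mem_one_unpaired single_l.
have /negbTE unpaired_r := count_mem_one_unpaired single_r.
by case: a b Pm => [] [] /= Pm; rewrite ?cats0 ?unpaired_l ?unpaired_r ?cats1 in Pm *;
  [right| | |left].
Qed.

End SeqFacts.

Lemma undup_map_in (aT rT : eqType) (f : aT -> rT) (s : seq aT) :
  {in s &, injective f} -> undup (map f s) = map f (undup s).
Proof.
elim: s => //= x s IH f_inj.
have f_inj_s : {in s &, injective f}.
  by move=> a b a_s b_s; apply: f_inj; rewrite inE ?a_s ?b_s orbT.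
have -> : (f x \in map f s) = (x \in s).
  apply/mapP/idP => [[y ys /f_inj Exy]|xs]; last by exists x.
  by rewrite Exy ?inE ?eqxx ?ys ?orbT.
by case: ifP => _; rewrite IH.
Qed.

Lemma paired_map_inj (aT rT : eqType) (f : aT -> rT) (u : seq aT) :
  injective f -> paired (map f u) = paired u.
Proof.
move=> f_inj; rewrite /paired all_map; apply: eq_all => x /=; rewrite count_map.
by congr (_ == 2); apply: eq_count => y /=; rewrite inj_eq.
Qed.

(** * Standardization and occurrences *)

(* [undup] keeps last occurrences, so [std] numbers the letters of [u] in the
   order of their last occurrences: the canonical form checked by [is_matching]. *)
Definition std (u : seq nat) : seq nat := map (fun x => (index x (undup u)).+1) u.

Lemma size_std u : size (std u) = size u.
Proof. exact: size_map. Qed.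

Lemma std_label_inj u : {in u &, injective (fun x : nat => (index x (undup u)).+1)}.
Proof.
move=> x y xu yu [] Exy.
by rewrite -(nth_index 0 (_ : x \in undup u)) ?mem_undup // Exy nth_index ?mem_undup.
Qed.

Lemma std_cons x s : std (x :: s) =
  if x \in s then (index x (undup s)).+1 :: std s else 1 :: map S (std s).
Proof.
rewrite /std /=; case: ifP => xs //=.
rewrite eqxx /=; congr (_ :: _); rewrite -map_comp; apply/eq_in_map => z zs /=.
by case: eqP => // zx; rewrite zx zs in xs.
Qed.

Lemma nth_std_eq u p q : p < size u -> q < size u ->
  (nth 0 (std u) p == nth 0 (std u) q) = (nth 0 u p == nth 0 u q).
Proof.
move=> pu qu; rewrite !(nth_map 0) //.
by apply/eqP/eqP => [/std_label_inj -> //|->] //; apply: mem_nth.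
Qed.

Lemma std_eq_pattern u v : size u = size v ->
  (forall p q, p < size u -> q < size u ->
     (nth 0 u p == nth 0 u q) = (nth 0 v p == nth 0 v q)) -> std u = std v.
Proof.
elim: u v => [|x u IH] [|y v] //= [Euv] Huv.
have std_uv : std u = std v by apply: IH => // p q; exact: (Huv p.+1 q.+1).
have mem_xy : (x \in u) = (y \in v).
  apply/idP/idP => /(nthP 0) [q qs Eq].
    have := Huv 0 q.+1 erefl qs; rewrite /= Eq eqxx => /esym/eqP ->.
    by apply: mem_nth; rewrite -Euv.
  have := Huv 0 q.+1 erefl; rewrite Euv => /(_ qs); rewrite /= Eq eqxx => /eqP ->.
  by apply: mem_nth; rewrite Euv.
rewrite !std_cons -mem_xy std_uv; case: ifP => // xu.
have qu : index x u < size u by rewrite index_mem.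
have := Huv 0 (index x u).+1 erefl qu; rewrite /= nth_index // eqxx => /esym/eqP yE.
have := congr1 (nth 0 ^~ (index x u)) std_uv.
by rewrite !(nth_map 0) -?Euv // nth_index // -yE => ->.
Qed.

Definition occurs (s t : seq nat) : Prop :=
  exists2 m : seq bool, size m = size t & std (mask m t) = s.

Lemma patternP sigma t : reflect (occurs (std sigma) t) (pattern sigma t).
Proof.
apply: (iffP existsP) => [[m /andP[/eqP Es /forallP same_eq]]|[m /eqP Sm Em]].
  exists m; first exact: size_tuple.
  apply: std_eq_pattern => // p q pu qu; rewrite Es in pu qu.
  by have /forallP /(_ (Ordinal qu)) /eqP -> := same_eq (Ordinal pu).
exists (Tuple Sm) => /=.
have Es : size (mask m t) = size sigma by rewrite -(size_std sigma) -Em size_std.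
apply/andP; split; first by rewrite Es.
apply/forallP => p; apply/forallP => q.
by rewrite -(nth_std_eq (ltn_ord p) (ltn_ord q)) -Em nth_std_eq ?Es.
Qed.

Lemma size_undup_std u : size (undup (std u)) = size (undup u).
Proof. by rewrite /std undup_map_in ?size_map //; apply: std_label_inj. Qed.

Lemma std_mapS u : std (map S u) = std u.
Proof.
rewrite /std (undup_map_inj succn_inj) -map_comp.
by apply: eq_map => x /=; rewrite (index_map succn_inj).
Qed.

Lemma std_pair c : std [:: c; c] = [:: 1; 1].
Proof. by rewrite /std /= inE eqxx /= eqxx. Qed.

Definition fresh (s : seq nat) : nat := (size (undup s)).+1.
Definition append_edge (s : seq nat) : seq nat := s ++ [:: fresh s; fresh s].
Definition wrap_edge (s : seq nat) : seq nat := fresh s :: rcons s (fresh s).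

Lemma std_append_pair v c : c \notin v -> std (v ++ [:: c; c]) = append_edge (std v).
Proof.
move=> cv; rewrite /append_edge /fresh size_undup_std /std undup_append_pair //.
rewrite map_cat /= -cats1 index_cat mem_undup (negbTE cv) /= eqxx addn0.
by congr (_ ++ _); apply/eq_in_map => x xv; rewrite index_cat mem_undup xv.
Qed.

Lemma std_wrap_pair v c : c \notin v -> std (c :: rcons v c) = wrap_edge (std v).
Proof.
move=> cv; rewrite /wrap_edge /fresh size_undup_std /std undup_wrap_pair //.
rewrite /= map_rcons -cats1 index_cat mem_undup (negbTE cv) /= eqxx addn0.
by congr (_ :: rcons _ _); apply/eq_in_map => x xv; rewrite index_cat mem_undup xv.
Qed.

Lemma paired_std u : paired (std u) = paired u.
Proof.
rewrite /paired /std all_map; apply: eq_in_all => x xu /=.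
rewrite count_map; congr (_ == 2); apply: eq_in_count => y yu /=.
by apply/eqP/eqP => [/(std_label_inj yu xu)|->].
Qed.

(** * Words of operations *)

Fixpoint build (w : seq bool) : seq nat :=
  if w is b :: w' then (if b then append_edge else wrap_edge) (build w') else [:: 1; 1].

Lemma undup_build w : undup (build w) = iota 1 (size w).+1.
Proof.
elim: w => [|b w IH] //; rewrite [LHS]/=.
have fresh_w : fresh (build w) = (size w).+2 by rewrite /fresh IH size_iota.
have fresh_notin : fresh (build w) \notin build w.
  by rewrite -mem_undup IH mem_iota fresh_w add1n ltnn andbF.
have -> : iota 1 (size w).+2 = rcons (iota 1 (size w).+1) (size w).+2.
  by rewrite -cats1 -[in LHS](addn1 (size w).+1) iotaD add1n.
rewrite -fresh_w -IH.
by case: b; rewrite ?undup_append_pair ?undup_wrap_pair.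
Qed.

Lemma fresh_build w : fresh (build w) = (size w).+2.
Proof. by rewrite /fresh undup_build size_iota. Qed.

Lemma fresh_notin_build w : fresh (build w) \notin build w.
Proof. by rewrite -mem_undup undup_build mem_iota fresh_build add1n ltnn andbF. Qed.

Lemma size_build w : size (build w) = (size w).+1.*2.
Proof.
elim: w => [|b w IH] //=.
by case: b; rewrite /= ?size_cat ?size_rcons IH /= ?addn2.
Qed.

Lemma paired_build w : paired (build w).
Proof.
elim: w => [|b w IH] //=; have cw := fresh_notin_build w.
by case: b; rewrite /= ?paired_append_pair ?paired_wrap_pair.
Qed.

Lemma build_matching w : is_matching (build w).
Proof.
by rewrite /is_matching undup_build size_build doubleK eqxx; apply: paired_build.
Qed.

Lemma filter_build_cons b w :
  filter (predC1 (fresh (build w))) (build (b :: w)) = build w.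
Proof.
have cw := fresh_notin_build w; have keep : filter (predC1 (fresh (build w))) (build w) = build w.
  by apply/all_filterP/allP => x xw; apply: contraTneq xw => ->.
by case: b; rewrite /= ?filter_cat ?filter_rcons /= eqxx keep ?cats0.
Qed.

Lemma head_build_cons b w : (head 0 (build (b :: w)) == fresh (build w)) = ~~ b.
Proof.
case: b; rewrite /= ?eqxx //.
case E: (build w) (fresh_notin_build w) (size_build w) => [|x s] //= + _.
by rewrite inE negb_or => /andP [/negbTE]; rewrite eq_sym.
Qed.

Lemma build_inj : injective build.
Proof.
elim=> [|b w IH] [|b' w'] E; have := congr1 size E; rewrite !size_build //=.
move=> /(congr1 half); rewrite !doubleK => -[] Sw.
have Fw : fresh (build w) = fresh (build w') by rewrite !fresh_build Sw.
have := congr1 (filter (predC1 (fresh (build w)))) E.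
rewrite {2}Fw !filter_build_cons => /IH ->.
have := congr1 (fun s => head 0 s == fresh (build w)) E.
by rewrite /= {2}Fw !head_build_cons => /negb_inj ->.
Qed.

(** * Patterns of tau n *)

Lemma size_tau n : size (tau n) = n.*2.
Proof.
elim: n => [|n IH] //=.
by case: ifP => _; rewrite /= ?size_cat ?size_rcons ?size_map IH ?addn2.
Qed.

Lemma nedges_tau n : nedges (tau n) = n.
Proof. by rewrite /nedges size_tau doubleK. Qed.

Lemma tau_S n : tau n.+1 =
  if odd n.+1 then tau n ++ [:: n.+1; n.+1] else 1 :: rcons (map S (tau n)) 1.
Proof. by rewrite [LHS]/= nedges_tau. Qed.

Lemma tau_letters n : all (fun x => 0 < x <= n) (tau n).
Proof.
elim: n => [|n IH] //; rewrite tau_S; case: ifP => _.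
  by rewrite all_cat /= leqnn !andbT; apply/allP => x /(allP IH) /andP [-> /leqW ->].
by rewrite /= all_rcons all_map /=; apply/allP => x /(allP IH) /andP [].
Qed.

Lemma succ_notin_tau n : n.+1 \notin tau n.
Proof. by apply/negP => /(allP (tau_letters n)) /andP [_]; rewrite ltnn. Qed.

Lemma one_notin_mapS_tau n : 1 \notin map S (tau n).
Proof. by apply/mapP => -[[|x] /(allP (tau_letters n)) // _ []]. Qed.

(* [tau n] is obtained from [tau 1 = 11] by applying, in this order, the
   operations [odd 2], ..., [odd n] (true: [append_edge], false: [wrap_edge]);
   [embeds w n] says that [n > 0] and [w] is a subword of [odd n :: ... :: odd 2]. *)
Fixpoint embeds (w : seq bool) (n : nat) : bool :=
  if n is n'.+1 then
    [|| w == [::], embeds w n' | if w is b :: w' then (b == odd n) && embeds w' n' else false]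
  else false.

Lemma embeds_S w n : embeds w n.+1 =
  [|| w == [::], embeds w n | if w is b :: w' then (b == odd n.+1) && embeds w' n else false].
Proof. by []. Qed.

Definition built_in (n : nat) (u : seq nat) : Prop :=
  u = [::] \/ exists2 w, embeds w n & std u = build w.

Lemma built_in_S n u : built_in n u -> built_in n.+1 u.
Proof. by case=> [->|[w ew Ew]]; [left | right; exists w; rewrite ?embeds_S ?ew ?orbT]. Qed.

Lemma built_in_mapS n u : built_in n u -> built_in n (map S u).
Proof. by case=> [->|[w ew Ew]]; [left | right; exists w; rewrite ?std_mapS]. Qed.

Lemma built_in_append n u c : odd n.+1 -> c \notin u ->
  built_in n u -> built_in n.+1 (u ++ [:: c; c]).
Proof.
move=> odd_n cu [->|[w ew Ew]]; right; first by exists [::]; rewrite ?std_pair.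
by exists (true :: w); rewrite ?embeds_S ?odd_n ?ew ?orbT // std_append_pair ?Ew.
Qed.

Lemma built_in_wrap n u c : ~~ odd n.+1 -> c \notin u ->
  built_in n u -> built_in n.+1 (c :: rcons u c).
Proof.
move=> even_n cu [->|[w ew Ew]]; right; first by exists [::]; rewrite ?std_pair.
exists (false :: w); last by rewrite std_wrap_pair ?Ew.
by rewrite embeds_S (negbTE even_n) ew !orbT.
Qed.

Lemma mask_tau_built_in n m : size m = size (tau n) ->
  paired (mask m (tau n)) -> built_in n (mask m (tau n)).
Proof.
elim: n m => [|n IH] m; first by move=> _ _; left; case: m.
rewrite tau_S; case: ifP => odd_n Sm Pm.
  have ct := succ_notin_tau n; rewrite size_cat addn2 in Sm.
  have [m1 S1 [E|E]] := mask_append_pair ct Sm Pm; rewrite E in Pm *.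
    exact/built_in_S/IH.
  have cm := notin_mask m1 ct.
  by apply: built_in_append => //; apply: IH => //; rewrite -(paired_append_pair cm).
have ct := one_notin_mapS_tau n; rewrite /= size_rcons in Sm.
have [m1 /[!size_map] S1 [E|E]] := mask_wrap_pair ct Sm Pm; rewrite E -map_mask in Pm *.
  by apply/built_in_S/built_in_mapS/IH => //; rewrite -(paired_map_inj _ succn_inj).
have cm : 1 \notin map S (mask m1 (tau n)) by rewrite map_mask notin_mask.
apply: built_in_wrap => //; first by rewrite odd_n.
by apply/built_in_mapS/IH => //; rewrite -(paired_map_inj _ succn_inj) -(paired_wrap_pair cm).
Qed.

Lemma occurs_nil t : occurs [::] t.
Proof. by exists (nseq (size t) false); rewrite ?size_nseq ?mask_false. Qed.

Lemma occurs_catr s t u : occurs s t -> occurs s (t ++ u).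
Proof.
case=> m Sm Em; exists (m ++ nseq (size u) false); first by rewrite !size_cat size_nseq Sm.
by rewrite mask_cat // mask_false cats0.
Qed.

Lemma occurs_wrap_inner s t c : occurs s t -> occurs s (c :: rcons t c).
Proof.
case=> m Sm Em; exists (false :: rcons m false); first by rewrite /= !size_rcons Sm.
by rewrite /= mask_rcons // cats0.
Qed.

Lemma occurs_mapS s t : occurs s t -> occurs s (map S t).
Proof. by case=> m Sm Em; exists m; rewrite ?size_map // -map_mask std_mapS. Qed.

Lemma occurs_append_edge s t c : c \notin t ->
  occurs s t -> occurs (append_edge s) (t ++ [:: c; c]).
Proof.
move=> ct [m Sm <-]; exists (m ++ [:: true; true]); first by rewrite !size_cat Sm.
by rewrite mask_cat //= std_append_pair // notin_mask.
Qed.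

Lemma occurs_wrap_edge s t c : c \notin t ->
  occurs s t -> occurs (wrap_edge s) (c :: rcons t c).
Proof.
move=> ct [m Sm <-]; exists (true :: rcons m true); first by rewrite /= !size_rcons Sm.
by rewrite /= mask_rcons // cats1 std_wrap_pair // notin_mask.
Qed.

Lemma embeds_occurs_tau n w : embeds w n -> occurs (build w) (tau n).
Proof.
elim: n w => [|n IH] w //; rewrite embeds_S tau_S.
case: ifP => _ /or3P [/eqP -> | /IH | ].
- exact: (occurs_append_edge (succ_notin_tau n) (occurs_nil _)).
- exact: occurs_catr.
- case: w => // b w /andP [/eqP -> /IH].
  exact: occurs_append_edge (succ_notin_tau n).
- exact: (occurs_wrap_edge (one_notin_mapS_tau n) (occurs_nil _)).
- by move/occurs_mapS/occurs_wrap_inner.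
- case: w => // b w /andP [/eqP -> /IH /occurs_mapS].
  exact: occurs_wrap_edge (one_notin_mapS_tau n).
Qed.

Lemma std_matching s : is_matching s -> std s = s.
Proof.
case/andP => /eqP U _; rewrite /std U -[RHS]map_id; apply/eq_in_map => x xs /=.
have xi : x \in iota 1 (size s)./2 by rewrite -U mem_undup.
have lt_i : index x (iota 1 (size s)./2) < (size s)./2.
  by rewrite -[X in _ < X](size_iota 1 (size s)./2) index_mem.
by rewrite -{2}(nth_index 0 xi) nth_iota // add1n.
Qed.

Lemma pattern_tauP n s : is_matching s -> s != [::] ->
  reflect (exists2 w, embeds w n & s = build w) (pattern s (tau n)).
Proof.
move=> Ms s_nil; apply: (iffP (patternP _ _)); rewrite std_matching //.
  case=> m Sm Em.
  have Pm : paired (mask m (tau n)) by rewrite -paired_std Em; case/andP: Ms.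
  have [Es|[w ew Ew]] := mask_tau_built_in Sm Pm.
    by move: s_nil; rewrite -Em Es.
  by exists w; rewrite // -Em Ew.
by case=> w /embeds_occurs_tau + ->.
Qed.

(** * Counting *)

(* [eq_adj w] marks the letters at which the greedy right-to-left embedding of
   [w] into [odd n :: ... :: odd 2] must skip a letter: those equal to the next
   one, and the last one if it is [true] (the rightmost letter [odd 2] is false). *)
Fixpoint eq_adj (w : seq bool) : seq bool :=
  if w is b :: w' then (b == head true w') :: eq_adj w' else [::].

Lemma size_eq_adj w : size (eq_adj w) = size w.
Proof. by elim: w => //= b w ->. Qed.

Lemma eq_adj_inj : injective eq_adj.
Proof.
elim=> [|b w IH] [|b' w'] //= [Eb /IH Ew]; subst w'; congr (_ :: _).
by move: Eb; case: b; case: b'; case: (head true w).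
Qed.

Lemma odd_embed_cost w : odd (size w + count id (eq_adj w)).+1 = head true w.
Proof.
elim: w => [|b w IH] //=; move: IH.
by case: b; case: (head true w); rewrite /= ?addn0 ?addn1 ?addnS ?addSn /= => ->.
Qed.

Lemma embeds_cost n w : embeds w n = (0 < n) && (size w + count id (eq_adj w) < n).
Proof.
elim: n w => [|n IH] w //; rewrite embeds_S IH; case: w => [|b w] //=; rewrite IH.
have -> : (size w).+1 + ((b == head true w) + count id (eq_adj w)) =
          (size w + count id (eq_adj w)).+1 + (b == head true w) by lia.
rewrite -odd_embed_cost; move: (size w + _) => c.
by case: b; case: (boolP (odd c.+1)) => odd_c; case: (boolP (odd n.+1)) => odd_n /=; lia.
Qed.

Lemma card_small_subsets (T : finType) N :
  #|[set A : {set T} | #|A| <= N]| = \sum_(i < N.+1) 'C(#|T|, i).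
Proof.
elim: N => [|N IH]; rewrite big_ord_recr /= -card_draws.
  by rewrite big_ord0 add0n; apply: eq_card => A; rewrite !inE leqn0.
rewrite -IH -(cardsID [set A : {set T} | #|A| <= N] [set A : {set T} | #|A| <= N.+1]).
congr (_ + _); apply: eq_card => A.
  by rewrite !inE andb_idl // => /leqW.
by rewrite !inE -ltnNge andbC -eqn_leq.
Qed.

Lemma card_set_tnth m (d : m.-tuple bool) : #|[set i | tnth d i]| = count id d.
Proof.
rewrite -[in RHS](map_tnth_enum d) count_map cardsE cardE /enum_mem size_filter.
by rewrite count_filter; apply: eq_count => i; rewrite /= andbT (tnth_nth (tnth_default d i)).
Qed.

Lemma card_tuples_count_le m N :
  #|[set d : m.-tuple bool | count id d <= N]| = \sum_(i < N.+1) 'C(m, i).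
Proof.
pose f (d : m.-tuple bool) := [set i | tnth d i].
pose g (A : {set 'I_m}) := [tuple i \in A | i < m].
have fK : cancel f g by move=> d; apply: eq_from_tnth => i; rewrite tnth_mktuple inE.
have gK : cancel g f by move=> A; apply/setP => i; rewrite inE tnth_mktuple.
rewrite -[m in RHS]card_ord -card_small_subsets -(card_imset _ (can_inj gK)).
rewrite (can2_imset_pre _ gK fK); apply: eq_card => d.
by rewrite !inE card_set_tnth.
Qed.

Lemma eq_adj_tupleP m (w : m.-tuple bool) : size (eq_adj w) == m.
Proof. by rewrite size_eq_adj size_tuple. Qed.

Lemma card_embeds m n : m < n ->
  #|[set w : m.-tuple bool | embeds w n]| = \sum_(i < (n - m.+1).+1) 'C(m, i).
Proof.
move=> lt_mn; pose f (w : m.-tuple bool) := Tuple (eq_adj_tupleP w).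
have f_inj : injective f by move=> w1 w2 /(congr1 val) /eq_adj_inj /val_inj.
rewrite -card_tuples_count_le -[RHS](card_preimset _ f_inj); apply: eq_card => w.
rewrite !inE embeds_cost size_tuple /=; lia.
Qed.

Lemma build_letters w x : x \in build w -> x <= (size w).+1.
Proof. by rewrite -mem_undup undup_build mem_iota add1n ltnS => /andP []. Qed.

Lemma occurs_pair_build w : occurs [:: 1; 1] (build w).
Proof.
elim: w => [|[] w IH]; first by exists [:: true; true].
  exact: occurs_catr.
exact: occurs_wrap_inner.
Qed.

Definition word_tuple k (w : k.-1.-tuple bool) : (2 * k).-tuple 'I_k.+1 :=
  [tuple inord (nth 0 (build w) i) | i < 2 * k].

Lemma map_val_word_tuple k (w : k.-1.-tuple bool) : 0 < k -> map val (word_tuple w) = build w.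
Proof.
move=> k_gt0; have Sw : size (build w) = 2 * k.
  by rewrite size_build size_tuple prednK // mul2n.
apply: (@eq_from_nth _ 0); first by rewrite size_map size_tuple Sw.
move=> i; rewrite size_map size_tuple => lt_i.
rewrite (nth_map ord0) ?size_tuple // -(tnth_nth ord0 _ (Ordinal lt_i)) tnth_mktuple /=.
have /build_letters : nth 0 (build w) i \in build w by rewrite mem_nth ?Sw.
by rewrite size_tuple prednK // => /inordK ->.
Qed.

Lemma fnk_card_embeds n k : 0 < k ->
  fnk n k = #|[set w : k.-1.-tuple bool | embeds w n]|.
Proof.
move=> k_gt0; have wt_inj : injective (@word_tuple k).
  move=> w1 w2 E; have := congr1 (fun t : (2 * k).-tuple _ => map val t) E.
  by rewrite !map_val_word_tuple // => /build_inj /val_inj.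
rewrite /fnk -(card_imset _ wt_inj); apply: eq_card => t; rewrite !inE.
apply/and3P/imsetP => [[Mt _ /pattern_tauP] | [w]].
  have t_nil : map val t != [::].
    by rewrite -size_eq0 size_map size_tuple muln_eq0 -lt0n k_gt0.
  case/(_ Mt t_nil) => w ew Ew.
  have /eqP Sw : size w = k.-1.
    have := congr1 size Ew; rewrite size_map size_tuple size_build -mul2n.
    by move=> /eqP; rewrite eqn_pmul2l // => /eqP ->.
  exists (Tuple Sw); first by rewrite inE.
  by apply/val_inj/(inj_map val_inj); rewrite map_val_word_tuple.
rewrite inE => ew ->; rewrite map_val_word_tuple //.
split; [exact: build_matching | by apply/patternP; apply: occurs_pair_build |].
by apply/pattern_tauP; [exact: build_matching | rewrite -size_eq0 size_build | exists w].
Qed.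

Lemma fnk_formula n k : 0 < k <= n -> fnk n k = \sum_(i < (n - k).+1) 'C(k.-1, i).
Proof. by case/andP => k_gt0 le_kn; rewrite fnk_card_embeds // card_embeds prednK. Qed.

Lemma fnk0 n : fnk n 0 = 0.
Proof.
apply: eq_card0 => t; rewrite !inE; apply/and3P => -[_ /patternP + _].
have -> : map val t = [::] by apply: size0nil; rewrite size_map size_tuple.
by case=> -[].
Qed.

Definition binom_head m r := \sum_(i < r) 'C(m, i).

Lemma binom_head0 r : binom_head 0 r.+1 = 1.
Proof. by rewrite /binom_head big_ord_recl big1 // => i _; rewrite bin0n. Qed.

Lemma binom_headS m r : binom_head m.+1 r.+1 = binom_head m r.+1 + binom_head m r.
Proof.
rewrite /binom_head big_ord_recl [in RHS]big_ord_recl !bin0 -addnA; congr (_ + _).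
by rewrite -big_split; apply: eq_bigr => i _; rewrite binS.
Qed.

Definition binom_triangle N := \sum_(m < N.+1) binom_head m (N.+1 - m).

Lemma binom_triangle_rec N :
  binom_triangle N.+2 = (binom_triangle N.+1 + binom_triangle N).+1.
Proof.
rewrite /binom_triangle big_ord_recl subn0 binom_head0 add1n; congr _.+1.
rewrite (eq_bigr (fun i : 'I_N.+2 => binom_head i (N.+2 - i) + binom_head i (N.+1 - i))).
  by rewrite big_split /= [X in _ + X]big_ord_recr /= subnn /binom_head big_ord0 addn0.
by move=> i _; rewrite /= /bump add1n subSS (@subSn i N.+1 (ltn_ord i)) binom_headS.
Qed.

Lemma binom_triangle_fib N : (binom_triangle N).+1 = fib N.+3.
Proof.
suff [] : (binom_triangle N).+1 = fib N.+3 /\ (binom_triangle N.+1).+1 = fib N.+4 by [].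
elim: N => [|N [IH1 IH2]]; first by rewrite /binom_triangle /binom_head !big_ord_recl !big_ord0.
by split=> //; rewrite binom_triangle_rec -addSn IH2 -addnS IH1.
Qed.

Lemma fn_binom_triangle N : fn N.+1 = binom_triangle N.
Proof.
rewrite /fn nedges_tau big_ord_recl fnk0; apply: eq_bigr => i _.
by rewrite fnk_formula /= /bump add1n // subSS -(@subSn i N) // -ltnS.
Qed.

Theorem proposition6 (n : nat) : 0 < n ->
  (forall k : nat, 0 < k <= n ->
     fnk n k = \sum_(i < (n - k).+1) 'C(k.-1, i)) /\
  fn n = fib (n + 2) - 1.
Proof.
case: n => [|N] // _; split; first exact: fnk_formula.
by rewrite fn_binom_triangle addn2 -binom_triangle_fib subn1.
Qed.
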